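(* For $n\geq 1$, let $G_n$ be the graph with vertex set $\{0,1,\ldots,n\}$ in which, for each $i\in\{0,\ldots,n-1\}$, there are $2i+1$ parallel edges $e_{i,1},\ldots,e_{i,2i+1}$ between $i$ and $i+1$ (and no other edges). Let $0<a<b$ and let the resistances $r_{i,k}=r_{e_{i,k}}$ be independent, each distributed according to $\frac12\delta_a+\frac12\delta_b$. Then, as $n\to\infty$, $$\mathbb{E}\big(\mathcal{R}_r(0\leftrightarrow n)\big)=\Theta(\log n)\quad\text{and}\quad \operatorname{Var}\big(\mathcal{R}_r(0\leftrightarrow n)\big)=\Theta(1),$$ where $\mathcal{R}_r(0\leftrightarrow n)=\sum_{i=0}^{n-1}\Big(\sum_{k=1}^{2i+1}\frac{1}{r_{i,k}}\Big)^{-1}$ is the effective resistance between $0$ and $n$.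
   Context: $f(n)=\Theta(g(n))$ means there are constants $0<c\le C$ such that $c\,g(n)\le f(n)\le C\,g(n)$ for all large $n$. *)

From HB Require Import structures.
From mathcomp Require Import all_boot all_order all_algebra.
From mathcomp Require Import reals exp.
Set Implicit Arguments. Unset Strict Implicit. Unset Printing Implicit Defensive.
Import Order.TTheory GRing.Theory Num.Theory.
Local Open Scope ring_scope.

(* A configuration of the resistances on G_n: for each level i < n and each
   parallel edge k < 2i+1 between i and i+1, a boolean choosing the
   resistance (false -> a, true -> b). *)
Definition config (n : nat) : finType :=
  {dffun forall i : 'I_n, {ffun 'I_(2 * i + 1) -> bool}}.

Definition resist {R : realType} (a b : R) (n : nat) (c : config n)
  (i : 'I_n) (k : 'I_(2 * i + 1)) : R := if c i k then b else a.

Definition eff_res {R : realType} (a b : R) (n : nat) (c : config n) : R :=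
  \sum_(i < n) (\sum_(k < 2 * i + 1) (resist a b c k)^-1)^-1.

(* The resistances are i.i.d. with law (delta_a + delta_b)/2, i.e. the
   configuration is uniformly distributed on the finite set config n. *)
Definition expect {R : realType} (n : nat) (X : config n -> R) : R :=
  (\sum_(c : config n) X c) / #|config n|%:R.

Definition ER {R : realType} (a b : R) (n : nat) : R :=
  expect (eff_res a b (n := n)).

Definition VarR {R : realType} (a b : R) (n : nat) : R :=
  expect (fun c : config n => (eff_res a b c - ER a b n) ^+ 2).

Definition bigTheta {R : realType} (f g : nat -> R) : Prop :=
  exists c C : R, exists N : nat, 0 < c /\ c <= C /\
    forall n : nat, (N <= n)%N -> c * g n <= f n /\ f n <= C * g n.

From HB Require Import structures.
From mathcomp Require Import all_boot all_order all_algebra.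
From mathcomp Require Import reals exp.
From mathcomp Require Import ring lra zify.
Import Order.TTheory GRing.Theory Num.Theory.
Local Open Scope ring_scope.
Set Implicit Arguments. Unset Strict Implicit. Unset Printing Implicit Defensive.

(* Levels of the graph carry independent bits, and the 2i+1 parallel
   resistances of level i lie in [a, b], so the resistance of level i lies in
   [a, b] / (2i+1).  Hence the expected resistance is within constant factors
   of sum_(i<n) 1/(2i+1), which is ln n / 2 + O(1).  By independence the
   variance is the sum of the level variances: each is at most
   ((b-a)/(2i+1))^2, a summable sequence, while level 0, a single resistance
   equal to a or b with probability 1/2, already contributes (b-a)^2/4.
   Independence of the levels under the uniform measure comes from its
   invariance under flipping the bits of one level. *)

Section Mean.
Variable R : realFieldType.

Definition mean (T : finType) (f : T -> R) : R := (\sum_x f x) / #|T|%:R.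

Definition var (T : finType) (f : T -> R) : R :=
  mean (fun x => (f x - mean f) ^+ 2).

Lemma eq_mean (T : finType) (f g : T -> R) : f =1 g -> mean f = mean g.
Proof. by move=> fg; rewrite /mean (eq_bigr _ (fun x _ => fg x)). Qed.

Lemma mean_sum (T J : finType) (F : J -> T -> R) :
  mean (fun x => \sum_j F j x) = \sum_j mean (F j).
Proof. by rewrite /mean exchange_big mulr_suml. Qed.

Lemma mean_cst (T : finType) (k : R) : (0 < #|T|)%N -> mean (fun _ : T => k) = k.
Proof.
by move=> T0; rewrite /mean sumr_const -[_ *+ _]mulr_natr mulfK // pnatr_eq0 -lt0n.
Qed.

Lemma mean_subr (T : finType) (f : T -> R) (k : R) :
  (0 < #|T|)%N -> mean (fun x => f x - k) = mean f - k.
Proof. by move=> T0; rewrite /mean sumrB mulrBl; congr (_ - _); apply: mean_cst. Qed.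

Lemma mean_bounds (T : finType) (f : T -> R) (L U : R) :
  (0 < #|T|)%N -> (forall x, L <= f x <= U) -> L <= mean f <= U.
Proof.
move=> T0 fLU; have T0' : (0 : R) < #|T|%:R by rewrite ltr0n.
rewrite ler_pdivlMr // ler_pdivrMr // !mulr_natr -!sumr_const.
by apply/andP; split; apply: ler_sum => x _; case/andP: (fLU x).
Qed.

Lemma var_ge0 (T : finType) (f : T -> R) : 0 <= var f.
Proof. by rewrite divr_ge0 ?ler0n // sumr_ge0 // => x _; rewrite sqr_ge0. Qed.

Lemma var_le (T : finType) (f : T -> R) (L U : R) :
  (0 < #|T|)%N -> (forall x, L <= f x <= U) -> var f <= (U - L) ^+ 2.
Proof.
move=> T0 fLU; have /andP[mL mU] := mean_bounds T0 fLU.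
suff /(mean_bounds T0)/andP[] : forall x, 0 <= (f x - mean f) ^+ 2 <= (U - L) ^+ 2 by [].
move=> x; have /andP[fL fU] := fLU x; rewrite sqr_ge0 /=.
move: (f x) (mean f) fL fU mL mU => y m *; nra.
Qed.

Lemma var_ge_pair (T : finType) (f : T -> R) (x y : T) :
  x != y -> (f x - f y) ^+ 2 / (2 * #|T|%:R) <= var f.
Proof.
move=> xy; have T0 : (0 : R) < #|T|%:R by rewrite ltr0n; apply/card_gt0P; exists x.
rewrite /var; set m := mean f; rewrite /mean invfM mulrA ler_pM2r ?invr_gt0 //.
rewrite (bigD1 x) //= (bigD1 y) /=; last by rewrite eq_sym.
have rest_ge0 : 0 <= \sum_(z | (z != x) && (z != y)) (f z - m) ^+ 2.
  by rewrite sumr_ge0 // => z _; rewrite sqr_ge0.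
(* [(u - w)^2 + (v - w)^2 >= (u - v)^2 / 2], whatever [w] is. *)
move: (f x) (f y) m rest_ge0 => u v w r0; have := sqr_ge0 (u + v - 2 * w); nra.
Qed.

End Mean.

Lemma card_ffun_bool_gt0 (A : finType) : (0 < #|{ffun A -> bool}|)%N.
Proof. by apply/card_gt0P; exists [ffun => false]. Qed.

Section IndependentCoordinates.
Variables (R : realFieldType) (I : finType) (A : I -> finType).
Notation cfg := {dffun forall i : I, {ffun A i -> bool}}.

Lemma card_cfg_gt0 : (0 < #|cfg|)%N.
Proof. by apply/card_gt0P; exists [ffun i => [ffun => false]]. Qed.

Definition flip_at (i : I) (x : {ffun A i -> bool}) (c : cfg) : cfg :=
  [ffun j => dfwith (fun j => c j) (c i + x) j].

Lemma flip_at_id i (x : {ffun A i -> bool}) c : flip_at x c i = c i + x.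
Proof. by rewrite ffunE dfwith_in. Qed.

Lemma flip_at_ne i (x : {ffun A i -> bool}) c j : j != i -> flip_at x c j = c j.
Proof. by move=> ji; rewrite ffunE dfwith_out // eq_sym. Qed.

Lemma flip_atK i (x : {ffun A i -> bool}) : involutive (flip_at x).
Proof.
move=> c; apply/ffunP => j; have [->|ji] := eqVneq j i; last by rewrite !flip_at_ne.
by apply/ffunP => k; rewrite !flip_at_id !ffunE; case: (c i k); case: (x k).
Qed.

(* Translating coordinate [i] by [x] permutes [cfg] and fixes [G], so the
   weight [f (c i)] may be averaged over all its translates. *)
Lemma mean_coord_mul (i : I) (f : {ffun A i -> bool} -> R) (G : cfg -> R) :
  (forall c c' : cfg, (forall j, j != i -> c j = c' j) -> G c = G c') ->
  mean (fun c : cfg => f (c i) * G c) = mean f * mean G.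
Proof.
move=> G_off_i.
have G_flip (x : {ffun A i -> bool}) c : G (flip_at x c) = G c.
  by apply: G_off_i => j; apply: flip_at_ne.
have sum_flip (x : {ffun A i -> bool}) :
    \sum_(c : cfg) f (c i) * G c = \sum_(c : cfg) f (c i + x) * G c.
  rewrite (reindex_inj (can_inj (flip_atK x))).
  by apply: eq_bigr => c _; rewrite flip_at_id G_flip.
have sum_all : #|{ffun A i -> bool}|%:R * \sum_(c : cfg) f (c i) * G c =
               (\sum_y f y) * \sum_(c : cfg) G c.
  transitivity (\sum_(x : {ffun A i -> bool}) \sum_(c : cfg) f (c i + x) * G c).
    by under [RHS]eq_bigr do rewrite -sum_flip; rewrite sumr_const mulr_natl.
  rewrite exchange_big mulr_sumr; apply: eq_bigr => c _; rewrite -mulr_suml.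
  by rewrite [X in _ = X * _](reindex_inj (addrI (c i))).
have X0 : #|{ffun A i -> bool}|%:R != 0 :> R.
  by rewrite pnatr_eq0 -lt0n card_ffun_bool_gt0.
by rewrite /mean -[\sum_(c : cfg) _](mulKf X0) sum_all; ring.
Qed.

Lemma mean_coord (i : I) (f : {ffun A i -> bool} -> R) :
  mean (fun c : cfg => f (c i)) = mean f.
Proof.
have := @mean_coord_mul i f (fun _ => 1) (fun _ _ _ => erefl).
by rewrite mean_cst ?card_cfg_gt0 // mulr1; under eq_mean do rewrite mulr1.
Qed.

Lemma mean_coordM (i j : I) (f : {ffun A i -> bool} -> R) (g : {ffun A j -> bool} -> R) :
  i != j -> mean (fun c : cfg => f (c i) * g (c j)) = mean f * mean g.
Proof.
move=> ij; rewrite (@mean_coord_mul i f (fun c => g (c j))) ?mean_coord //.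
by move=> c c' cc'; rewrite cc' // eq_sym.
Qed.

Lemma mean_sum_coord (f : forall i, {ffun A i -> bool} -> R) :
  mean (fun c : cfg => \sum_i f i (c i)) = \sum_i mean (f i).
Proof. by rewrite mean_sum; apply: eq_bigr => i _; apply: mean_coord. Qed.

Lemma var_sum_coord (f : forall i, {ffun A i -> bool} -> R) :
  var (fun c : cfg => \sum_i f i (c i)) = \sum_i var (f i).
Proof.
rewrite /var mean_sum_coord.
under eq_mean do rewrite -sumrB expr2 mulr_suml.
rewrite mean_sum; apply: eq_bigr => i _.
under eq_mean do rewrite mulr_sumr.
rewrite mean_sum (bigD1 i) //= big1 ?addr0.
  under eq_mean do rewrite -expr2.
  exact: (mean_coord (fun y => (f i y - mean (f i)) ^+ 2)).
move=> j ji; rewrite (@mean_coordM i j (fun y => f i y - mean (f i))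
                                     (fun y => f j y - mean (f j))) 1?eq_sym //.
by rewrite !mean_subr ?card_ffun_bool_gt0 // subrr mul0r.
Qed.

End IndependentCoordinates.

Lemma inv_sum_inv_bounds (R : realFieldType) (m : nat) (x : 'I_m -> R) (L U : R) :
  (0 < m)%N -> 0 < L -> (forall k, L <= x k <= U) ->
  L / m%:R <= (\sum_k (x k)^-1)^-1 <= U / m%:R.
Proof.
move=> m0 L0 xLU; have m0' : (0 : R) < m%:R by rewrite ltr0n.
have U0 : 0 < U by have /andP[xL xU] := xLU (Ordinal m0); lra.
have sum_const_inv (c : R) : \sum_(k < m) c^-1 = m%:R / c.
  by rewrite sumr_const card_ord mulr_natl.
have lo : m%:R / U <= \sum_k (x k)^-1.
  rewrite -sum_const_inv; apply: ler_sum => k _.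
  by have /andP[xL xU] := xLU k; rewrite lef_pV2 ?posrE // (lt_le_trans L0).
have hi : \sum_k (x k)^-1 <= m%:R / L.
  rewrite -sum_const_inv; apply: ler_sum => k _.
  by have /andP[xL xU] := xLU k; rewrite lef_pV2 ?posrE // (lt_le_trans L0).
have s0 : 0 < \sum_k (x k)^-1 by apply: lt_le_trans lo; rewrite divr_gt0.
by rewrite -[L / _]invf_div -[U / _]invf_div !lef_pV2 ?posrE ?divr_gt0 ?lo ?hi.
Qed.

Section Logarithm.
Variable R : realType.

Lemma ln_le_subr1 (x : R) : 0 < x -> ln x <= x - 1.
Proof. by move=> x0; have := @le_ln1Dx R (x - 1); rewrite subrKC; apply; lra. Qed.

Lemma ln_ratio_bounds (x y : R) :
  0 < x -> 0 < y -> 1 - x / y <= ln y - ln x <= y / x - 1.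
Proof.
move=> x0 y0; have := ln_le_subr1 (divr_gt0 x0 y0).
have := ln_le_subr1 (divr_gt0 y0 x0); rewrite !ln_div ?posrE //.
by move=> *; apply/andP; split; lra.
Qed.

Lemma ln_succ_bounds (k : nat) :
  (k.+2%:R)^-1 <= ln (k.+2%:R : R) - ln k.+1%:R <= (k.+1%:R)^-1.
Proof.
have t0 : (0 : R) < k.+1%:R by rewrite ltr0n.
have := ln_ratio_bounds t0 (ltr0n R k.+2).
rewrite -[k.+2%:R]natr1; move: (k.+1%:R : R) t0 => t t0.
have t1 : t + 1 != 0 by rewrite gt_eqF //; lra.
have e1 : 1 - t / (t + 1) = (t + 1)^-1 by field.
have e2 : (t + 1) / t - 1 = t^-1 by field; rewrite gt_eqF.
by rewrite e1 e2.
Qed.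

Lemma ln_nat_telescope (n : nat) :
  ln (n.+1%:R : R) = \sum_(k < n) (ln k.+2%:R - ln k.+1%:R).
Proof.
have := telescope_sumr (fun k => ln (k.+1%:R : R)) (leq0n n).
by rewrite big_mkord ln1 subr0.
Qed.

Lemma harmonic_ge_ln (n : nat) : ln (n.+1%:R : R) <= \sum_(i < n) (i.+1%:R)^-1.
Proof.
rewrite ln_nat_telescope; apply: ler_sum => k _.
by case/andP: (ln_succ_bounds k).
Qed.

Lemma harmonic_le_ln (n : nat) : \sum_(i < n) (i.+1%:R)^-1 <= 1 + ln (n%:R : R).
Proof.
case: n => [|n]; first by rewrite big_ord0 ln0 // addr0.
rewrite big_ord_recl invr1 lerD2l ln_nat_telescope; apply: ler_sum => k _.
by case/andP: (ln_succ_bounds k).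
Qed.

Lemma sum_inv_sqr_le (n : nat) : \sum_(i < n) (i.+1%:R ^+ 2 : R)^-1 <= 2.
Proof.
have step (k : nat) : (k.+2%:R ^+ 2 : R)^-1 <= (k.+1%:R)^-1 - (k.+2%:R)^-1.
  rewrite -[k.+2%:R]natr1; move: (k.+1%:R : R) (ltr0Sn R k) => t t0.
  have t1 : t + 1 != 0 by rewrite gt_eqF //; lra.
  have -> : t^-1 - (t + 1)^-1 = (t * (t + 1))^-1 by field; rewrite t1 gt_eqF.
  by rewrite expr2 lef_pV2 ?posrE ?mulr_gt0 ?ltr_pwDr //; nra.
case: n => [|n]; first by rewrite big_ord0.
rewrite big_ord_recl expr1n invr1 -[2]/(1 + 1 : R) lerD2l.
have tel := telescope_sumr (fun k => - (k.+1%:R : R)^-1) (leq0n n).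
rewrite big_mkord /= invr1 opprK in tel.
apply: (@le_trans _ _ (1 - (n.+1%:R)^-1)); last by rewrite gerBl invr_ge0.
rewrite addrC -tel; apply: ler_sum => k _; rewrite opprK addrC; exact: step.
Qed.

Lemma half_le_ln_nat (n : nat) : (2 <= n)%N -> 2^-1 <= ln (n%:R : R).
Proof.
move=> n2; have n0 : (0 : R) < n%:R by rewrite ltr0n; lia.
have /andP[lo _] := ln_ratio_bounds ltr01 n0; rewrite ln1 subr0 mul1r in lo.
have : (n%:R : R)^-1 <= 2^-1 by rewrite lef_pV2 ?posrE ?ler_nat.
lra.
Qed.

Lemma sum_inv_odd_bounds (n : nat) :
  ln (n.+1%:R : R) / 2 <= \sum_(i < n) ((2 * i + 1)%:R)^-1 <= 1 + ln (n%:R : R).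
Proof.
have odd_ge (i : nat) : (i.+1%:R : R)^-1 / 2 <= ((2 * i + 1)%:R)^-1.
  by rewrite -invfM -natrM lef_pV2 ?posrE ?ltr0n ?ler_nat; lia.
have odd_le (i : nat) : ((2 * i + 1)%:R : R)^-1 <= (i.+1%:R)^-1.
  by rewrite lef_pV2 ?posrE ?ltr0n ?ler_nat; lia.
apply/andP; split.
  apply: le_trans (_ : \sum_(i < n) (i.+1%:R)^-1 / 2 <= _); last first.
    by apply: ler_sum => i _; apply: odd_ge.
  by rewrite -mulr_suml ler_pM2r ?invr_gt0 // harmonic_ge_ln.
by apply: le_trans (harmonic_le_ln n); apply: ler_sum => i _; apply: odd_le.
Qed.

Lemma sum_inv_odd_sqr_le (n : nat) : \sum_(i < n) ((2 * i + 1)%:R ^+ 2 : R)^-1 <= 2.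
Proof.
apply: le_trans (sum_inv_sqr_le n); apply: ler_sum => i _.
by rewrite lef_pV2 ?posrE ?exprn_gt0 ?ltr0n -?natrX ?ler_nat ?leq_exp2r //; lia.
Qed.

End Logarithm.

Section Resistances.
Variables (R : realType) (a b : R).
Hypotheses (a_gt0 : 0 < a) (a_lt_b : a < b).

Definition bundle_res (m : nat) (y : {ffun 'I_m -> bool}) : R :=
  (\sum_k (if y k then b else a)^-1)^-1.

Let odd_gt0 (i : nat) : (0 < 2 * i + 1)%N. Proof. by rewrite addn1. Qed.

(* [ER] and [VarR] are [mean] and [var] of [eff_res] on [config n], and
   [eff_res c] is the sum of the [bundle_res (c i)]. *)
Lemma ER_sum (n : nat) : ER a b n = \sum_(i < n) mean (@bundle_res (2 * i + 1)).
Proof.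
exact: (mean_sum_coord (A := fun i : 'I_n => 'I_(2 * i + 1))
                       (fun i => @bundle_res (2 * i + 1))).
Qed.

Lemma VarR_sum (n : nat) : VarR a b n = \sum_(i < n) var (@bundle_res (2 * i + 1)).
Proof.
exact: (var_sum_coord (A := fun i : 'I_n => 'I_(2 * i + 1))
                      (fun i => @bundle_res (2 * i + 1))).
Qed.

Lemma bundle_res_bounds (m : nat) (y : {ffun 'I_m -> bool}) :
  (0 < m)%N -> a / m%:R <= bundle_res y <= b / m%:R.
Proof.
move=> m0; apply: inv_sum_inv_bounds => // k.
by case: (y k); rewrite lexx ?andbT ?(ltW a_lt_b).
Qed.

Lemma ER_bounds (n : nat) :
  a * \sum_(i < n) ((2 * i + 1)%:R)^-1 <= ER a b n <=
  b * \sum_(i < n) ((2 * i + 1)%:R)^-1.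
Proof.
rewrite ER_sum !mulr_sumr; apply/andP; split; apply: ler_sum => i _;
  have /andP[] // := mean_bounds (card_ffun_bool_gt0 _)
                                 (fun y => bundle_res_bounds y (odd_gt0 i)).
Qed.

Lemma VarR_le (n : nat) :
  VarR a b n <= (b - a) ^+ 2 * \sum_(i < n) ((2 * i + 1)%:R ^+ 2)^-1.
Proof.
rewrite VarR_sum mulr_sumr; apply: ler_sum => i _.
rewrite -exprVn -exprMn mulrBl.
exact: var_le (card_ffun_bool_gt0 _) (fun y => bundle_res_bounds y (odd_gt0 i)).
Qed.

Lemma VarR_ge (n : nat) : (b - a) ^+ 2 / 4 <= VarR a b n.+1.
Proof.
rewrite VarR_sum big_ord_recl -[X in X <= _]addr0.
apply: lerD; last by apply: sumr_ge0 => i _; apply: var_ge0.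
have bundle_res1 (z : bool) : bundle_res [ffun _ : 'I_1 => z] = if z then b else a.
  by rewrite /bundle_res big_ord1 ffunE invrK.
have neq : [ffun => true] != [ffun => false] :> {ffun 'I_1 -> bool}.
  by apply/eqP => /ffunP /(_ ord0); rewrite !ffunE.
have := var_ge_pair (@bundle_res 1) neq.
by rewrite !bundle_res1 card_ffun card_bool card_ord expn1 -natrM.
Qed.

End Resistances.

Unset Implicit Arguments.

Theorem proposition2 (R : realType) (a b : R) (ha : 0 < a) (hab : a < b) :
  bigTheta (ER a b) (fun n : nat => ln (n%:R : R)) /\
  bigTheta (VarR a b) (fun _ : nat => 1 : R).
Proof.
have b_gt0 : 0 < b by apply: lt_trans hab.
split.
  exists (a / 2), (3 * b), 2%N; split; first by rewrite divr_gt0.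
  split=> [|n n_ge2]; first lra.
  have /andP[ER_lo ER_hi] := ER_bounds ha hab n.
  have /andP[S_lo S_hi] := sum_inv_odd_bounds R n.
  have ln_ge_half := half_le_ln_nat R n_ge2.
  have ln_le_succ : ln (n%:R : R) <= ln n.+1%:R.
    by rewrite ler_ln ?posrE ?ltr0n ?ler_nat //; lia.
  split; nra.
have d_gt0 : 0 < (b - a) ^+ 2 by rewrite exprn_gt0 // subr_gt0.
exists ((b - a) ^+ 2 / 4), (2 * (b - a) ^+ 2), 1%N; split; first by rewrite divr_gt0.
split=> [|[//|n] _]; first lra.
rewrite !mulr1; split; first exact: VarR_ge.
apply: le_trans (VarR_le ha hab n.+1) _.
by rewrite [2 * _]mulrC ler_pM2l // sum_inv_odd_sqr_le.
Qed.
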